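(* Let $\bar x$ be a sparsest solution of problem (P), and let $\tilde X$ be an optimal solution of the QBP program for some $\lambda\ge0$. Suppose that: - $\operatorname{rank}(\tilde X)=1$; - $B$ is $(\epsilon,2\|\tilde X\|_0)$-RIP-1 for some $\epsilon<1$. Then $\tilde X=\begin{bmatrix}1\\ \bar x\end{bmatrix}\begin{bmatrix}1 & \bar x^H\end{bmatrix}$.
   Context: Fix integers $n,N\ge 1$ and data $a_i\in\mathbb{C}$, $b_i,c_i\in\mathbb{C}^n$, $Q_i\in\mathbb{C}^{n\times n}$, $y_i\in\mathbb{C}$ for $i=1,\dots,N$. Problem (P) is $$\min_{x\in\mathbb{C}^n}\|x\|_0\quad\text{subject to}\quad y_i=a_i+b_i^H x+x^H c_i+x^H Q_i x,\quad i=1,\dots,N.$$ Here $\|\cdot\|_0$ counts nonzero entries of a vector or matrix, and ${}^H$ denotes conjugate transpose. Let $\Phi_i=\begin{bmatrix} a_i & b_i^H\\ c_i & Q_i\end{bmatrix}\in\mathbb{C}^{(n+1)\times(n+1)}$. Define the linear operator $B:\mathbb{C}^{(n+1)\times(n+1)}\to\mathbb{C}^N$ by $B(X)=(\operatorname{tr}(\Phi_i X))_{i=1}^N$. The QBP program with parameter $\lambda\ge0$ is $$\min_{X}\ \operatorname{tr}(X)+\lambda\|X\|_1\quad\text{subject to}\quad y_i=\operatorname{tr}(\Phi_i X)\ (i=1,\dots,N),\quad X_{1,1}=1,\quad X\succeq0,$$ where $X$ ranges over Hermitian $(n+1)\times(n+1)$ matrices and $\|\cdot\|_1$ is the sum of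 absolute values of the entries of a vector or matrix. $B$ is called $(\epsilon,k)$-RIP-1 if $\left|\frac{\|B(X)\|_1}{\|X\|_1}-1\right|<\epsilon$ for every nonzero $X$ with $\|X\|_0\le k$. *)

(* Complex numbers are modelled by an arbitrary
   numClosedFieldType C (algebraically closed field with conjugation and
   the partial order of C: 0 <= z iff z is real and nonnegative). *)
From HB Require Import structures.
From mathcomp Require Import all_boot all_order all_algebra.
Set Implicit Arguments. Unset Strict Implicit. Unset Printing Implicit Defensive.
Import Order.TTheory GRing.Theory Num.Theory.
Local Open Scope ring_scope.

Section Defs.
Variable C : numClosedFieldType.

Definition conjT m n (A : 'M[C]_(m, n)) : 'M[C]_(n, m) := (map_mx Num.conj A)^T.

Definition l0 m n (A : 'M[C]_(m, n)) : nat :=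
  #|[set p : 'I_m * 'I_n | A p.1 p.2 != 0]|.

Definition l1 m n (A : 'M[C]_(m, n)) : C := \sum_(i < m) \sum_(j < n) `|A i j|.

Definition l1vec N (v : 'I_N -> C) : C := \sum_(i < N) `|v i|.

Definition hermitian m (X : 'M[C]_m) : Prop := conjT X = X.

Definition psd m (X : 'M[C]_m) : Prop :=
  hermitian X /\ forall v : 'cV[C]_m, 0 <= (conjT v *m X *m v) 0 0.

Definition Phi n (a : C) (b c : 'cV[C]_n) (Q : 'M[C]_n) : 'M[C]_(1 + n) :=
  block_mx (a%:M) (conjT b) c Q.

Definition quadval n (a : C) (b c : 'cV[C]_n) (Q : 'M[C]_n) (x : 'cV[C]_n) : C :=
  a + (conjT b *m x) 0 0 + (conjT x *m c) 0 0 + (conjT x *m Q *m x) 0 0.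

Definition feasibleP n N (a : 'I_N -> C) (b c : 'I_N -> 'cV[C]_n)
  (Q : 'I_N -> 'M[C]_n) (y : 'I_N -> C) (x : 'cV[C]_n) : Prop :=
  forall i, y i = quadval (a i) (b i) (c i) (Q i) x.

Definition sparsest n N a b c Q y (x : 'cV[C]_n) : Prop :=
  @feasibleP n N a b c Q y x /\
  forall x', @feasibleP n N a b c Q y x' -> (l0 x <= l0 x')%N.

Definition Bop n N (a : 'I_N -> C) (b c : 'I_N -> 'cV[C]_n) (Q : 'I_N -> 'M[C]_n)
  (X : 'M[C]_(1 + n)) : 'I_N -> C :=
  fun i => \tr (Phi (a i) (b i) (c i) (Q i) *m X).

Definition feasibleQBP n N a b c Q (y : 'I_N -> C) (X : 'M[C]_(1 + n)) : Prop :=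
  [/\ forall i, y i = @Bop n N a b c Q X i,
      X ord0 ord0 = 1 & psd X].

Definition qbp_obj n (lam : C) (X : 'M[C]_(1 + n)) : C := \tr X + lam * l1 X.

Definition optimalQBP n N a b c Q y (lam : C) (X : 'M[C]_(1 + n)) : Prop :=
  @feasibleQBP n N a b c Q y X /\
  forall X', @feasibleQBP n N a b c Q y X' -> qbp_obj lam X <= qbp_obj lam X'.

Definition RIP1 n N a b c Q (eps : C) (k : nat) : Prop :=
  forall X : 'M[C]_(1 + n), X != 0 -> (l0 X <= k)%N ->
    `| l1vec (@Bop n N a b c Q X) / l1 X - 1 | < eps.

End Defs.

From Pilot Require Import Defs.
From HB Require Import structures.
From mathcomp Require Import all_boot all_order all_algebra.
From mathcomp Require Import ring.
Set Implicit Arguments. Unset Strict Implicit. Unset Printing Implicit Defensive.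
Import Order.TTheory GRing.Theory Num.Theory.
Local Open Scope ring_scope.

(* Write lift x = [1; x] and outer v = v v^H.  The proof combines four facts:
   1. B(outer (lift x))_i is the quadratic form a_i + b_i^H x + x^H c_i + x^H Q_i x,
      so x solves (P) iff outer (lift x) satisfies the linear QBP constraints.
   2. A Hermitian rank-one matrix X with X_{1,1} = 1 equals outer (lift x), where
      x is the lower part of its first column (all 2x2 minors of X vanish).
   3. ||outer v||_0 = ||v||_0^2 and ||lift x||_0 = 1 + ||x||_0, so lifting is
      monotone in sparsity, and ||X - Y||_0 <= ||X||_0 + ||Y||_0.
   4. RIP-1 with eps <= 1 forces B to be injective on k-sparse matrices.
   For the theorem, Xt = outer (lift xt) with xt feasible for (P); since xbar is
   sparsest, outer (lift xbar) is at most as sparse as Xt, so the difference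
   lies in ker B and is 2 ||Xt||_0-sparse, hence zero by RIP-1. *)

Section QBPRecovery.
Variable C : numClosedFieldType.

Definition lift n (x : 'cV[C]_n) : 'cV[C]_(1 + n) := col_mx 1%:M x.
Definition outer m (v : 'cV[C]_m) : 'M[C]_m := v *m conjT v.

Lemma conjT_col_mx m1 m2 (A : 'M[C]_(m1, 1)) (B : 'M[C]_(m2, 1)) :
  conjT (col_mx A B) = row_mx (conjT A) (conjT B).
Proof. by rewrite /conjT map_col_mx tr_col_mx. Qed.

Lemma conjT_scalar1 : conjT (1%:M : 'M[C]_1) = 1%:M.
Proof. by apply/matrixP => i j; rewrite !mxE !ord1 /= conjC1. Qed.

Lemma trace_Phi_outer_lift n (a : C) (b c : 'cV[C]_n) (Q : 'M[C]_n) (x : 'cV[C]_n) :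
  \tr (Phi a b c Q *m outer (lift x)) = quadval a b c Q x.
Proof.
rewrite /outer /lift mulmxA mxtrace_mulC /mxtrace big_ord1.
rewrite conjT_col_mx conjT_scalar1 /Phi mul_block_col mul_row_col.
rewrite !mul1mx !mulmx1 !mulmxDr !mulmxA /quadval !mxE /= mulr1n.
by rewrite -!addrA; congr (_ + _); rewrite addrC -!addrA; congr (_ + _); rewrite addrC.
Qed.

Lemma Bop_outer_lift n N a b c Q (x : 'cV[C]_n) (i : 'I_N) :
  Bop a b c Q (outer (lift x)) i = quadval (a i) (b i) (c i) (Q i) x.
Proof. exact: trace_Phi_outer_lift. Qed.

Lemma Bop_sub n N a b c Q (X Y : 'M[C]_(1 + n)) (i : 'I_N) :
  Bop a b c Q (X - Y) i = Bop a b c Q X i - Bop a b c Q Y i.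
Proof. by rewrite /Bop mulmxBr linearB. Qed.

Lemma rank1_minor m p (X : 'M[C]_(m, p)) : \rank X = 1%N ->
  forall i j k l, X i j * X k l = X i l * X k j.
Proof.
move=> rkX i j k l; have := mulmx_base X.
move: (col_base X) (row_base X); rewrite rkX => u v <-.
by rewrite !mxE !big_ord1; ring.
Qed.

(* A Hermitian rank-one matrix normalized by X_{1,1} = 1 is the outer product
   of its first column.  (Defs.hermitian is qualified to avoid MathComp's
   sesquilinear notion of the same name.) *)
Lemma hermitian_rank1_outer m (X : 'M[C]_m.+1) :
  Defs.hermitian X -> \rank X = 1%N -> X ord0 ord0 = 1 -> X = outer (col ord0 X).
Proof.
move=> hermX rkX X00; apply/matrixP => i j.
have conj_col : (X j ord0)^* = X ord0 j by rewrite -[in RHS]hermX /conjT !mxE.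
rewrite !mxE big_ord1 !mxE conj_col.
by rewrite -[LHS]mulr1 -X00 rank1_minor.
Qed.

Lemma lift_dsubmx n (v : 'cV[C]_(1 + n)) : v ord0 ord0 = 1 -> lift (dsubmx v) = v.
Proof.
move=> v00; rewrite -[RHS](vsubmxK v); congr col_mx.
apply/matrixP => i j; rewrite !ord1 !mxE.
by rewrite (_ : lshift n ord0 = ord0) //; apply: val_inj.
Qed.

Lemma l0_sum m p (A : 'M[C]_(m, p)) :
  l0 A = (\sum_i \sum_j (A i j != 0%R : nat))%N.
Proof.
rewrite /l0 pair_bigA /= -sum1_card big_mkcond /=.
by apply: eq_bigr => ij _; rewrite inE; case: (A ij.1 ij.2 != 0).
Qed.

Lemma l0_subr m p (A B : 'M[C]_(m, p)) : (l0 (A - B) <= l0 A + l0 B)%N.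
Proof.
rewrite !l0_sum -big_split /=; apply: leq_sum => i _.
rewrite -big_split /=; apply: leq_sum => j _; rewrite !mxE.
case: (eqVneq (A i j) 0) => [->|_]; last exact: leq_trans (leq_b1 _) (leq_addr _ _).
by rewrite sub0r oppr_eq0; case: (B i j != 0).
Qed.

Lemma l0_col m (v : 'cV[C]_m) : l0 v = (\sum_i (v i ord0 != 0%R : nat))%N.
Proof. by rewrite l0_sum; apply: eq_bigr => i _; rewrite big_ord1. Qed.

Lemma l0_outer m (v : 'cV[C]_m) : l0 (outer v) = (l0 v * l0 v)%N.
Proof.
rewrite l0_sum l0_col big_distrl /=; apply: eq_bigr => i _.
rewrite big_distrr /=; apply: eq_bigr => j _.
rewrite !mxE big_ord1 !mxE mulf_eq0 negb_or conjC_eq0.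
by case: (_ != 0); case: (_ != 0).
Qed.

Lemma l0_lift n (x : 'cV[C]_n) : l0 (lift x) = (1 + l0 x)%N.
Proof.
rewrite !l0_col big_split_ord big_ord1 col_mxEu mxE oner_eq0.
by congr (_ + _)%N; apply: eq_bigr => i _; rewrite col_mxEd.
Qed.

Lemma RIP1_null_sparse n N a b c Q (eps : C) (k : nat) (X : 'M[C]_(1 + n)) :
  eps <= 1 -> @RIP1 C n N a b c Q eps k ->
  (forall i, Bop a b c Q X i = 0) -> (l0 X <= k)%N -> X = 0.
Proof.
move=> eps_le1 rip BX0 sparseX; apply/eqP; apply: contraT => nzX.
have := rip X nzX sparseX.
rewrite /l1vec big1 => [|i _]; last by rewrite BX0 normr0.
rewrite mul0r sub0r normrN normr1 => lt1eps.
by have := lt_le_trans lt1eps eps_le1; rewrite ltxx.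
Qed.

End QBPRecovery.

Theorem mainTheorem4 (C : numClosedFieldType) (n N : nat) (hn : (1 <= n)%N) (hN : (1 <= N)%N)
  (a : 'I_N -> C) (b c : 'I_N -> 'cV[C]_n) (Q : 'I_N -> 'M[C]_n) (y : 'I_N -> C)
  (xbar : 'cV[C]_n) (lam : C) (Xt : 'M[C]_(1 + n)) :
  0 <= lam ->
  sparsest a b c Q y xbar ->
  optimalQBP a b c Q y lam Xt ->
  \rank Xt = 1%N ->
  (exists eps : C, eps < 1 /\ RIP1 a b c Q eps (2 * l0 Xt)) ->
  Xt = col_mx (1%:M : 'M[C]_1) xbar *m conjT (col_mx (1%:M : 'M[C]_1) xbar).
Proof.
move=> _ [feas_bar min_bar] [[feasXt Xt00 [hermXt _]] _] rkXt [eps [eps_lt1 rip]].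
pose xt := dsubmx (col ord0 Xt).
have XtE : Xt = outer (lift xt).
  by rewrite lift_dsubmx ?mxE // -hermitian_rank1_outer.
have feas_xt : feasibleP a b c Q y xt.
  by move=> i; rewrite feasXt XtE Bop_outer_lift.
have sparser : (l0 (outer (lift xbar)) <= l0 Xt)%N.
  by rewrite XtE !l0_outer !l0_lift leq_mul // leq_add2l min_bar.
apply/eqP; rewrite -subr_eq0; apply/eqP.
apply: (RIP1_null_sparse (ltW eps_lt1) rip).
  by move=> i; rewrite Bop_sub Bop_outer_lift -feasXt -feas_bar subrr.
apply: leq_trans (l0_subr _ _) _.
by rewrite mul2n -addnn leq_add2l.
Qed.
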